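(* Let $D\ge 2$ be an integer. For all sufficiently large $n$ the following holds. Let $1\le t\le n$, let $\Gamma\sim\Gamma(n,D)$ be the random block model with vertex set $W$, and let $\mathcal{B}$ be a (fixed) well-behaved multiset of $t$ subsets of $W$. Fix $1\le k\le N$ and any vertex $u\in W_k\setminus\bigcup\mathcal{B}$, and let $\mathcal{E}$ be the event that there exists $B\in\mathcal{B}$ such that $u\in N_\Gamma(B)$. Then \[\Pr(\mathcal{E})\ge \min\Big\{\frac14,\; t\,n^{D^{1-k}-1}(\log n)^2(\log\log n)^D\Big\}.\]
   Context: Random block model $\Gamma(n,D)$ (for integers $D\ge 2$, $n$; $\log$ is the natural logarithm; rounding to integers is ignored). Let $N$ be the smallest integer with $n^{D^{1-N}}\le 3^{D^2}$. For $1\le i,k\le N$ let \[p_{i,k}=\min\big\{n^{-D^{-1}+D^{-i}+D^{-k}}(\log n)^{2/D}(\log\log n)^3,\,1\big\},\qquad \Delta_i=n^{D^{1-i}}.\] The vertex set is $W=W_1\,\dot\cup\cdots\dot\cup\, W_N$ with pairwise disjoint blocks of sizes $|W_k|=100\cdot 3^D n^{1-D^{-k}}$. For each pair of distinct vertices $u\in W_i$, $v\in W_k$ (possibly $i=k$), $uv$ is an edge independently with probability $p_{i,k}$. Each block $W_k$ is partitioned into sub-blocks $W_{k,1}$ of size $\frac12|W_k|$ and $W_{k,2},\dots,W_{k,\log n}$, each of size at least $\frac{1}{2\log n}|W_k|$. Well-behaved: for $1\le t\le n$, a multiset $\mathcal{B}=\{B_i\}_{i=1}^t$ with each $B_i\subseteq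 W$ is well-behaved if (NB1) $|B_i|\le D$ for all $i$; (NB2) for all $1\le k\le N$ and all $u\in W_k$, $|\{i\in[t]: u\in B_i\}|\le \Delta_k$; (NB3) for each $1\le k\le N$ and $1\le j\le \log n$, $|\bigcup\mathcal{B}\cap W_{k,j}|\le\frac12|W_{k,j}|$. Here $\bigcup\mathcal{B}=\bigcup_i B_i$. $N_\Gamma(B)$ denotes the common neighbourhood of $B$ in $\Gamma$ (the set of vertices adjacent to every vertex of $B$), with $N_\Gamma(\emptyset)$ being all vertices. *)

From mathcomp Require Import all_boot all_order all_algebra.
From mathcomp Require Import reals exp.
Set Implicit Arguments. Unset Strict Implicit. Unset Printing Implicit Defensive.
Import Order.TTheory GRing.Theory Num.Theory.
Local Open Scope ring_scope.

Section RandomBlockModel.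
Variables (R : realType) (D n : nat).

Definition nR : R := n%:R.
Definition Dpow (x : R) : R := (D%:R : R) `^ x.

Definition pblk (i k : nat) : R :=
  Num.min (nR `^ (- (D%:R)^-1 + Dpow (- i%:R) + Dpow (- k%:R))
           * (ln nR) `^ (2 / D%:R) * (ln (ln nR)) ^+ 3) 1.

Definition Delta (i : nat) : R := nR `^ (Dpow (1 - i%:R)).

Definition blk_size (k : nat) : R := 100 * 3 ^+ D * nR `^ (1 - Dpow (- k%:R)).

Definition is_N (N : nat) : Prop :=
  nR `^ (Dpow (1 - N%:R)) <= 3 ^+ (D ^ 2)
  /\ forall z : int, nR `^ (Dpow (1 - z%:~R)) <= 3 ^+ (D ^ 2) -> (N%:Z <= z)%R.

Variables (V : finType) (blk : V -> nat).

Definition Wblk (k : nat) : {set V} := [set v | blk v == k].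

Definition pair_prob (e : {set V}) : R :=
  if [pick xy : V * V | (xy.1 != xy.2) && (e == [set xy.1; xy.2])] is Some xy
  then pblk (blk xy.1) (blk xy.2) else 0.

Definition pairs : {set {set V}} := [set e : {set V} | #|e| == 2%N].

Definition graph_weight (G : {set {set V}}) : R :=
  \prod_(e in pairs) (if e \in G then pair_prob e else 1 - pair_prob e).

Definition adj (G : {set {set V}}) (x y : V) : bool := (x != y) && ([set x; y] \in G).

Definition common_nbhd (G : {set {set V}}) (B : {set V}) : {set V} :=
  [set v | [forall b in B, adj G b v]].

Definition Prob (Ev : pred {set {set V}}) : R :=
  \sum_(G : {set {set V}} | (G \subset pairs) && Ev G) graph_weight G.

End RandomBlockModel.

(* Second moment method.  Let Q(A) be the probability that u is adjacent to all of A,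
   the product of p_{blk b, k} over b in A, and let Y count the sets B_i joined to u,
   each weighted by 1 / Q(B_i); then E[Y] = t and E[Y^2] = sum_{i,j} 1 / Q(B_i n B_j),
   so P(Y > 0) >= t / c as soon as E[Y^2] <= c t.
   Expanding 1 / Q(B_i n B_j) over the nonempty subsets S of B_i whose edge probabilities
   are below 1 (at most 2^D of them), the number of j with S in B_j is at most the degree
   Delta of the vertex of S in the highest block, which Q(S) cancels up to beta^-D, where
   p_{i,k} = min{beta n^{D^{-i}}, 1}.  So c = t + 2^D / beta^D works, and since
   beta^D = n^{D^{1-k}-1} (log n)^2 (log log n)^{3D}, t / c exceeds the claimed bound
   once log log n >= 2. *)

From mathcomp Require Import all_boot all_order all_algebra.
From mathcomp Require Import reals exp sequences.
From mathcomp Require Import ring lra.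
Import Order.TTheory GRing.Theory Num.Theory.
Local Open Scope ring_scope.

Lemma sum_bernoulli_supset (R : comPzRingType) (T : finType) (P F : {set T})
    (f : T -> R) :
  F \subset P ->
  \sum_(J : {set T} | (J \subset P) && (F \subset J))
     \prod_(e in P) (if e \in J then f e else 1 - f e) = \prod_(e in F) f e.
Proof.
move=> FP.
have := @bigA_distr R 0 1 *%R +%R T
  (fun e => if e \in P then f e else 0)
  (fun e => if e \in P then (if e \in F then 0 else 1 - f e) else 1).
have -> : \prod_e ((if e \in P then f e else 0) +
                   (if e \in P then if e \in F then 0 else 1 - f e else 1))
          = \prod_(e in F) f e.
  rewrite [RHS]big_mkcond; apply: eq_bigr => e _.
  case: (boolP (e \in F)) => eF; first by rewrite (subsetP FP _ eF) addr0.
  by case: (e \in P); rewrite ?add0r // addrC subrK.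
move=> ->; rewrite [LHS]big_mkcond /=; apply: eq_big => // J _.
case: ifP => [/andP[JP FJ]|].
  rewrite [LHS]big_mkcond; apply: eq_bigr => e _.
  case: (boolP (e \in P)) => eP; last by rewrite (contraNF (subsetP JP e) eP).
  case: (boolP (e \in J)) => // eJ.
  by rewrite (contraNF (subsetP FJ e) eJ).
move/negbT; rewrite negb_and => /orP[/subsetPn[e eJ eP]|/subsetPn[e eF eJ]].
  by rewrite (bigD1 e) //= eJ (negbTE eP) mul0r.
by rewrite (bigD1 e) //= (negbTE eJ) (subsetP FP _ eF) eF mul0r.
Qed.

Lemma second_moment_bound (R : realFieldType) (T : finType) (S E : pred T)
    (pi Y : T -> R) (c : R) :
  (forall x, S x -> 0 <= pi x) -> 0 < c -> (forall x, ~~ E x -> Y x = 0) ->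
  \sum_(x | S x) pi x * Y x ^+ 2 <= c * \sum_(x | S x) pi x * Y x ->
  (\sum_(x | S x) pi x * Y x) / c <= \sum_(x | S x && E x) pi x.
Proof.
move=> pi_ge0 c_gt0 YE second_le.
set m := \sum_(x | S x) pi x * Y x in second_le *.
have -> : m / c = (2 * c * m - c * m) / c ^+ 2 by field; rewrite gt_eqF.
apply: le_trans (_ : (2 * c * m - \sum_(x | S x) pi x * Y x ^+ 2) / c ^+ 2 <= _).
  by rewrite ler_pM2r ?invr_gt0 ?exprn_gt0 // lerD2l lerN2.
(* pointwise, [E x] >= (2 c Y - Y^2) / c^2 = 1 - (1 - Y / c)^2 *)
rewrite /m mulr_sumr -sumrB mulr_suml [leRHS]big_mkcondr /=.
apply: ler_sum => x Sx.
have -> : (2 * c * (pi x * Y x) - pi x * Y x ^+ 2) / c ^+ 2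
          = pi x * ((2 * c * Y x - Y x ^+ 2) / c ^+ 2) by field; rewrite gt_eqF.
case: (boolP (E x)) => Ex; last by rewrite YE // expr0n mulr0 subrr mul0r mulr0.
rewrite -[leRHS]mulr1 ler_wpM2l ?pi_ge0 // ler_pdivrMr ?exprn_gt0 // mul1r.
by have := sqr_ge0 (c - Y x); lra.
Qed.

Lemma prod_setU_setI (R : comPzSemiRingType) (T : finType) (q : T -> R) (A B : {set T}) :
  \prod_(b in A :|: B) q b * \prod_(b in A :&: B) q b
  = \prod_(b in A) q b * \prod_(b in B) q b.
Proof.
rewrite [\prod_(b in A :|: B) _](big_setID A) [\prod_(b in B) _](big_setID A) /=.
rewrite setUK setDUl setDv set0U [B :&: A]setIC.
by rewrite -mulrA; congr (_ * _); rewrite mulrC.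
Qed.

Lemma prod_setU_div (R : fieldType) (T : finType) (q : T -> R) (A B : {set T}) :
  (forall b, q b != 0) ->
  \prod_(b in A :|: B) q b / (\prod_(b in A) q b * \prod_(b in B) q b)
  = (\prod_(b in A :&: B) q b)^-1.
Proof.
move=> q_neq0; have prod_neq0 C : \prod_(b in C) q b != 0 by apply/prodf_neq0.
by rewrite -prod_setU_setI invfM mulrA mulfV ?mul1r.
Qed.

Lemma prod_setI_lt1 (R : realDomainType) (T : finType) (q : T -> R) (A : {set T}) :
  (forall b, q b <= 1) -> \prod_(b in A) q b = \prod_(b in A :&: [set b | q b < 1]) q b.
Proof.
move=> q_le1; rewrite (big_setID [set b | q b < 1]) /=.
rewrite [X in _ * X]big1 ?mulr1 // => b; rewrite !inE => /andP[/negbTE q_nlt1 _].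
by apply/eqP; rewrite eq_le q_le1 /= leNgt q_nlt1.
Qed.

Section CodegreeSum.
Variables (R : realFieldType) (V : finType) (lvl : V -> nat) (g q : V -> R) (beta : R).
Variables (D t : nat) (B : 'I_t -> {set V}).
Hypotheses (beta_gt0 : 0 < beta) (g_gt0 : forall b, 0 < g b).
Hypothesis g_anti : forall b c, (lvl b <= lvl c)%N -> g c <= g b.
Hypothesis deg_B_le : forall b, #|[set j | b \in B j]|%:R <= g b ^+ D.
Hypothesis card_B_le : forall i, (#|B i| <= D)%N.

Hypothesis q_minE : forall b, q b = Num.min (beta * g b) 1.

Let q_gt0 b : 0 < q b. Proof. by rewrite q_minE lt_min ltr01 andbT mulr_gt0. Qed.

Let q_le1 b : q b <= 1. Proof. by rewrite q_minE ge_min lexx orbT. Qed.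

Let q_lt1E b : q b < 1 -> q b = beta * g b.
Proof. by rewrite q_minE; case: (lerP (beta * g b) 1) => // _; rewrite ltxx. Qed.

Let prod_q_gt0 (S : {set V}) : 0 < \prod_(b in S) q b.
Proof. exact: prodr_gt0. Qed.

(* Look at the vertex s of S of highest level: its degree is at most g s ^ D,
   while each factor of the product over S is at least beta * g s. *)
Lemma codegree_div_prod_le (S : {set V}) :
  S != set0 -> S \subset [set b | q b < 1] -> (#|S| <= D)%N ->
  (\sum_j (S \subset B j)%:R) / \prod_(b in S) q b <= (beta ^+ D)^-1.
Proof.
move=> /set0Pn[s0 s0S] S_lt1 card_S.
have [s sS s_max] := arg_maxnP lvl s0S.
have qs_lt1 : q s < 1 by move: (subsetP S_lt1 s sS); rewrite inE.
have scale_gt0 : 0 < beta * g s by rewrite mulr_gt0.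
have codeg_le : \sum_j (S \subset B j)%:R <= g s ^+ D.
  apply: le_trans (deg_B_le s).
  rewrite -sum1dep_card natr_sum [leRHS]big_mkcond ler_sum // => j _.
  have [/subsetP /(_ s sS) -> //|_] := boolP (S \subset B j).
  by case: (s \in B j).
have prod_ge : (beta * g s) ^+ D <= \prod_(b in S) q b.
  apply: le_trans (_ : (beta * g s) ^+ #|S| <= _).
    by rewrite ler_wiXn2l // ltW // -q_lt1E.
  rewrite -prodr_const ler_prod // => b bS.
  have qb_lt1 : q b < 1 by move: (subsetP S_lt1 b bS); rewrite inE.
  by rewrite ltW //= q_lt1E // ler_pM2l //; apply: g_anti; exact: s_max.
apply: le_trans (_ : g s ^+ D / (beta * g s) ^+ D <= _).
  apply: ler_pM => //; first by rewrite sumr_ge0 // => j _; rewrite ler0n.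
    by rewrite invr_ge0 ltW.
  by rewrite lef_pV2 ?posrE ?exprn_gt0.
by rewrite exprMn invfM mulrCA mulfV ?mulr1 // expf_neq0 // gt_eqF.
Qed.

Lemma sum_inv_prod_setI_le i :
  \sum_j (\prod_(b in B i :&: B j) q b)^-1 <= t%:R + 2 ^+ D / beta ^+ D.
Proof.
set W := B i :&: [set b | q b < 1].
have card_W : (#|W| <= D)%N by rewrite (leq_trans _ (card_B_le i)) ?subset_leq_card ?subsetIl.
pose codeg_sum j := \sum_(S in powerset W | S != set0) (S \subset B j)%:R / \prod_(b in S) q b.
have inv_prod_le j : (\prod_(b in B i :&: B j) q b)^-1 <= 1 + codeg_sum j.
  rewrite prod_setI_lt1 //; set S0 := _ :&: _.
  have term_ge0 (S : {set V}) : 0 <= (S \subset B j)%:R / \prod_(b in S) q b.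
    by rewrite mulr_ge0 ?ler0n ?invr_ge0 ?ltW.
  have [->|S0_neq0] := eqVneq S0 set0.
    by rewrite big_set0 invr1 lerDl; apply: sumr_ge0.
  rewrite /codeg_sum (bigD1 S0) /=; last first.
    by rewrite powersetE S0_neq0 andbT /S0 /W setIAC subsetIl.
  have -> : S0 \subset B j by rewrite /S0 -setIA setIC -setIA subsetIl.
  by rewrite mul1r addrCA lerDl addr_ge0 ?sumr_ge0.
apply: le_trans (_ : \sum_j (1 + codeg_sum j) <= _); first exact: ler_sum.
rewrite big_split /= sumr_const card_ord lerD2l /codeg_sum exchange_big /=.
apply: le_trans (_ : \sum_(S in powerset W | S != set0) (beta ^+ D)^-1 <= _).
  apply: ler_sum => S /andP[]; rewrite powersetE => SW S_neq0.
  rewrite -mulr_suml codegree_div_prod_le ?(subset_trans SW) ?subsetIr //.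
  exact: leq_trans (subset_leq_card SW) card_W.
apply: le_trans (_ : \sum_(S in powerset W) (beta ^+ D)^-1 <= _).
  rewrite [leRHS](bigID (fun S => S != set0)) /= lerDl sumr_ge0 // => S _.
  by rewrite invr_ge0 exprn_ge0 // ltW.
rewrite sumr_const card_powerset -[leLHS]mulr_natl.
apply: ler_wpM2r; first by rewrite invr_ge0 exprn_ge0 // ltW.
by rewrite -natrX ler_nat leq_exp2l.
Qed.

Lemma sum_sum_inv_prod_setI_le :
  \sum_i \sum_j (\prod_(b in B i :&: B j) q b)^-1 <= t%:R * (t%:R + 2 ^+ D / beta ^+ D).
Proof.
rewrite mulr_natl -[in X in _ *+ X](card_ord t) -sumr_const.
by apply: ler_sum => i _; apply: sum_inv_prod_setI_le.
Qed.

End CodegreeSum.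

Section CommonNeighbourhoodProbability.
Variables (R : realType) (D n : nat) (V : finType) (blk : V -> nat).
Hypothesis pblk_ge0_le1 : forall i j, 0 <= pblk R D n i j <= 1.

Local Notation weight := (graph_weight R D n blk).

Definition expect (f : {set {set V}} -> R) : R :=
  \sum_(G : {set {set V}} | G \subset pairs V) weight G * f G.

Definition star (u : V) (A : {set V}) : {set {set V}} := [set [set b; u] | b in A].

Lemma graph_weight_ge0 G : 0 <= weight G.
Proof.
apply: prodr_ge0 => e _.
have /andP[p_ge0 p_le1] : 0 <= pair_prob R D n blk e <= 1.
  by rewrite /pair_prob; case: pickP => [xy _|_]; rewrite ?pblk_ge0_le1 ?lexx ?ler01.
by case: ifP => _; rewrite ?subr_ge0.
Qed.

Lemma eq_expect (f h : {set {set V}} -> R) : f =1 h -> expect f = expect h.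
Proof. by move=> fh; apply: eq_bigr => G _; rewrite fh. Qed.

Lemma expect_sum (I : finType) (f : I -> {set {set V}} -> R) :
  expect (fun G => \sum_i f i G) = \sum_i expect (f i).
Proof. by rewrite /expect exchange_big; apply: eq_bigr => G _; rewrite mulr_sumr. Qed.

Lemma expectZ a (f : {set {set V}} -> R) : expect (fun G => a * f G) = a * expect f.
Proof. by rewrite /expect mulr_sumr; apply: eq_bigr => G _; rewrite mulrCA. Qed.

Lemma pair_prob_set2 (b u : V) :
  b != u -> pair_prob R D n blk [set b; u] = pblk R D n (blk b) (blk u).
Proof.
move=> b_neq_u; rewrite /pair_prob; case: pickP => [[x y] /= /andP[x_neq_y /eqP xy_bu]|no_pick].
  have: [set x; y] == [set b; u] by rewrite xy_bu.
  rewrite eqEsubset !subUset !sub1set !inE -!andbA.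
  move: x_neq_y => /[swap] /and4P[/orP[]/eqP-> /orP[]/eqP-> _ _];
    rewrite ?eqxx // => _ //.
  by rewrite /pblk addrAC.
by move: (no_pick (b, u)); rewrite /= b_neq_u eqxx.
Qed.

Lemma expect_star_subset u (A : {set V}) : u \notin A ->
  expect (fun G => (star u A \subset G)%:R) = \prod_(b in A) pblk R D n (blk b) (blk u).
Proof.
move=> uNA; have b_neq_u b : b \in A -> b != u by move=> bA; apply: contraNneq uNA => <-.
have star_pairs : star u A \subset pairs V.
  by apply/subsetP => e /imsetP[b bA ->]; rewrite inE cards2 b_neq_u.
rewrite /expect (eq_bigr (fun G : {set {set V}} => if star u A \subset G then weight G else 0));
  last by move=> G _; rewrite mulr_natr mulrb.
rewrite -big_mkcondr /= /graph_weight (@sum_bernoulli_supset _ _ _ _ _ star_pairs) big_imset /=.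
  by apply: eq_bigr => b bA; rewrite pair_prob_set2 ?b_neq_u.
move=> b c bA cA /setP/(_ b); rewrite !inE eqxx /= eq_sym (negbTE (b_neq_u b bA)).
by rewrite orbF => /esym/eqP.
Qed.

Variables (u : V) (t : nat) (B : 'I_t -> {set V}).
Hypothesis uNB : forall i, u \notin B i.
Hypothesis pblk_u_gt0 : forall b, 0 < pblk R D n (blk b) (blk u).

Local Notation q b := (pblk R D n (blk b) (blk u)).

Let prod_q_neq0 (A : {set V}) : \prod_(b in A) q b != 0.
Proof. by apply/prodf_neq0 => b _; rewrite gt_eqF ?pblk_u_gt0. Qed.

Let Y (G : {set {set V}}) : R :=
  \sum_i (\prod_(b in B i) q b)^-1 * (star u (B i) \subset G)%:R.

Let expect_Y : expect Y = t%:R.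
Proof.
rewrite /Y expect_sum (eq_bigr (fun=> 1)) ?sumr_const ?card_ord // => i _.
by rewrite expectZ expect_star_subset // mulVf.
Qed.

Let expect_Y2 :
  expect (fun G => Y G ^+ 2) = \sum_i \sum_j (\prod_(b in B i :&: B j) q b)^-1.
Proof.
have Y2E G : Y G ^+ 2 = \sum_i \sum_j
    (\prod_(b in B i) q b * \prod_(b in B j) q b)^-1 * (star u (B i :|: B j) \subset G)%:R.
  rewrite expr2 /Y big_distrl; apply: eq_bigr => i _ /=.
  rewrite big_distrr; apply: eq_bigr => j _ /=.
  rewrite /star imsetU subUset invfM.
  by case: (_ \subset G); case: (_ \subset G); rewrite ?mulr0 ?mul0r ?mulr1 // mulrACA.
rewrite (eq_expect _ _ Y2E) expect_sum.
apply: eq_bigr => i _; rewrite expect_sum; apply: eq_bigr => j _.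
rewrite expectZ expect_star_subset; last by rewrite inE negb_or !uNB.
by rewrite mulrC prod_setU_div // => b; rewrite gt_eqF.
Qed.

Lemma prob_exists_common_nbhd_ge c : 0 < c ->
  \sum_i \sum_j (\prod_(b in B i :&: B j) q b)^-1 <= t%:R * c ->
  t%:R / c <= Prob R D n blk (fun G => [exists i, u \in common_nbhd G (B i)]).
Proof.
move=> c_gt0 second_le; rewrite -expect_Y.
apply: second_moment_bound => //; first by move=> G _; exact: graph_weight_ge0.
  move=> G /existsPn noNB; rewrite /Y big1 // => i _.
  case: (boolP (star u (B i) \subset G)) => [/subsetP starG|]; last by rewrite mulr0.
  have /negP[] := noNB i; rewrite inE; apply/forallP => b; apply/implyP => bBi.
  rewrite /adj starG ?andbT; last by apply/imsetP; exists b.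
  by apply: contraNneq (uNB i) => <-.
by rewrite -/(expect (fun G => Y G ^+ 2)) -/(expect Y) expect_Y2 expect_Y mulrC.
Qed.

End CommonNeighbourhoodProbability.

Lemma half_le_ln2 (R : realType) : 1 / 2 <= ln (2 : R).
Proof.
have expR_half_le2 : expR (1 / 2 : R) <= 2.
  have := expR_ge1Dx (- (1 / 2) : R); rewrite expRN.
  rewrite -(@ler_pM2r _ (expR (1 / 2))) ?expR_gt0 // mulVf ?gt_eqF ?expR_gt0 //.
  lra.
by rewrite -[leLHS]expRK ler_ln ?posrE ?expR_gt0.
Qed.

Lemma half_log2_le_ln (R : realType) (m : nat) (x : R) : 2 ^+ m <= x -> m%:R / 2 <= ln x.
Proof.
move=> x_ge; have pow2_gt0 : (0 : R) < 2 ^+ m by rewrite exprn_gt0.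
apply: le_trans (_ : ln (2 ^+ m) <= _); last by rewrite ler_ln ?posrE // (lt_le_trans pow2_gt0).
rewrite lnXn // -mulr_natr.
by have := half_le_ln2 R; have := ler0n R m; nra.
Qed.

Lemma two_le_ln_ln (R : realType) (x : R) : 2 ^+ 32 <= x -> 2 <= ln (ln x).
Proof.
move=> /half_log2_le_ln ln_ge; have /half_log2_le_ln : (2 : R) ^+ 4 <= ln x.
  by apply: le_trans ln_ge; rewrite -natrX ler_pdivlMr // -natrM ler_nat.
lra.
Qed.

Lemma min_quarter_le_ratio (R : realFieldType) (a y z : R) :
  0 <= a -> 2 <= z -> z ^+ 2 <= y -> Num.min (1 / 4) a <= a * y / (a * y + z).
Proof.
move=> a_ge0 z_ge2 zy.
have y_ge : 2 * z <= y by apply: le_trans zy; rewrite expr2 ler_wpM2r //; lra.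
have ay_ge0 : 0 <= a * y by rewrite mulr_ge0 //; lra.
rewrite ler_pdivlMr; last by lra.
have [a_ge|a_lt] := lerP (1 / 4) a.
  have : 1 / 4 * y <= a * y by rewrite ler_wpM2r //; lra.
  lra.
have ay_le : a * y <= 1 / 4 * y by rewrite ler_wpM2r //; lra.
have : a * (a * y + z - y) <= 0 by apply: mulr_ge0_le0 => //; lra.
rewrite mulrBr mulrDr; lra.
Qed.

Section EdgeProbabilityScaling.
Variables (R : realType) (D n k : nat).
Hypothesis D_gt0 : (0 < D)%N.
Hypothesis lnln_gt0 : 0 < ln (ln (nR R n)).

Local Notation nr := (nR R n).

Definition edge_scale : R :=
  nr `^ (- (D%:R)^-1 + Dpow D (- k%:R)) * ln nr `^ (2 / D%:R) * ln (ln nr) ^+ 3.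

Definition level_weight (i : nat) : R := nr `^ Dpow D (- i%:R).

Let ln_nr_gt1 : 1 < ln nr.
Proof. by rewrite ltNge; apply: contraTN lnln_gt0 => /ln_le0; rewrite leNgt. Qed.

Let nr_gt1 : 1 < nr.
Proof.
rewrite ltNge; apply: contraTN ln_nr_gt1 => /ln_le0 ln_le0; rewrite -leNgt.
exact: le_trans ln_le0 ler01.
Qed.

Let nr_gt0 : 0 < nr. Proof. exact: lt_trans ltr01 nr_gt1. Qed.

Let ln_nr_gt0 : 0 < ln nr. Proof. exact: lt_trans ltr01 ln_nr_gt1. Qed.

Let D_neq0 : (D%:R : R) != 0. Proof. by rewrite pnatr_eq0 -lt0n. Qed.

Let Dpow1B (x : R) : Dpow D (1 - x) = D%:R * Dpow D (- x).
Proof. by rewrite /Dpow powRD ?powRr1 ?ler0n // D_neq0 implybT. Qed.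

Lemma edge_scale_gt0 : 0 < edge_scale.
Proof. by rewrite !mulr_gt0 ?powR_gt0 ?exprn_gt0. Qed.

Lemma level_weight_gt0 i : 0 < level_weight i.
Proof. exact: powR_gt0. Qed.

Lemma level_weight_anti i j : (i <= j)%N -> level_weight j <= level_weight i.
Proof.
move=> ij; apply: ler_powR; first exact: ltW.
by apply: ler_powR; rewrite ?ler1n // lerN2 ler_nat.
Qed.

Lemma pblk_scaleE i : pblk R D n i k = Num.min (edge_scale * level_weight i) 1.
Proof.
rewrite /pblk /edge_scale /level_weight addrAC powRD ?(gt_eqF nr_gt0) ?implybT //.
by congr (Num.min _ 1); ring.
Qed.

Lemma Delta_level_weight i : Delta R D n i = level_weight i ^+ D.
Proof.
by rewrite /Delta Dpow1B mulrC powRrM powR_mulrn ?powR_ge0.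
Qed.

Lemma edge_scale_expn : edge_scale ^+ D
  = nr `^ (Dpow D (1 - k%:R) - 1) * ln nr ^+ 2 * ln (ln nr) ^+ (3 * D).
Proof.
have powR_expn (a x : R) : 0 <= a -> (a `^ x) ^+ D = a `^ (x * D%:R).
  by move=> a_ge0; rewrite powRrM powR_mulrn ?powR_ge0.
rewrite /edge_scale 2!exprMn -exprM !powR_expn ?ltW //.
rewrite Dpow1B mulrDl mulNr mulVf // divfK // powR_mulrn ?ltW //.
by congr (nr `^ _ * _ * _); ring.
Qed.

Lemma min_le_div_edge_scale (t : nat) : 2 <= ln (ln nr) ->
  Num.min (1 / 4) (t%:R * nr `^ (Dpow D (1 - k%:R) - 1) * ln nr ^+ 2 * ln (ln nr) ^+ D)
  <= t%:R / (t%:R + 2 ^+ D / edge_scale ^+ D).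
Proof.
move=> lnln_ge2; set a := t%:R * _ * _ * _.
have scale_gt0 : 0 < edge_scale ^+ D by rewrite exprn_gt0 ?edge_scale_gt0.
have t_scale : t%:R * edge_scale ^+ D = a * ln (ln nr) ^+ (2 * D).
  by rewrite edge_scale_expn /a (_ : 3 * D = D + 2 * D)%N ?exprD; [ring | rewrite mulSn].
have -> : t%:R / (t%:R + 2 ^+ D / edge_scale ^+ D)
          = a * ln (ln nr) ^+ (2 * D) / (a * ln (ln nr) ^+ (2 * D) + 2 ^+ D).
  rewrite -t_scale; field.
  by rewrite !gt_eqF // ltr_wpDl ?mulr_ge0 ?ler0n ?exprn_gt0 ?ltW.
apply: min_quarter_le_ratio.
- by rewrite /a !mulr_ge0 ?ler0n ?powR_ge0 ?exprn_ge0 ?ltW.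
- by rewrite -natrX ler_nat -{1}(expn1 2) leq_exp2l.
- have lnln_ge0 : 0 <= ln (ln nr) by apply: le_trans lnln_ge2.
  rewrite mulnC exprM; apply: lerXn2r; rewrite ?nnegrE ?exprn_ge0 //.
  by apply: lerXn2r; rewrite ?nnegrE.
Qed.

End EdgeProbabilityScaling.

Theorem lemma2p7 (R : realType) (D : nat) (HD : (2 <= D)%N) :
  exists n0 : nat, forall n : nat, (n0 <= n)%N ->
  forall (N : nat), is_N R D n N ->
  forall (V : finType) (blk : V -> nat) (L : nat) (sub : V -> nat),
    (* vertex set W = W_1 u ... u W_N with |W_k| = 100 3^D n^{1-D^{-k}} up to rounding *)
    (forall v, (1 <= blk v <= N)%N) ->
    (forall k, (1 <= k <= N)%N ->
       `| #|Wblk blk k|%:R - blk_size R D n k | < 1) ->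
    (* sub-blocks W_{k,1},...,W_{k,L}, L = log n up to rounding *)
    `| L%:R - ln (nR R n) | < 1 ->
    (forall v, (1 <= sub v <= L)%N) ->
    (forall k, (1 <= k <= N)%N ->
       `| #|[set v in Wblk blk k | sub v == 1%N]|%:R - #|Wblk blk k|%:R / 2 | < (1 : R)) ->
    (forall k j, (1 <= k <= N)%N -> (2 <= j <= L)%N ->
       #|Wblk blk k|%:R / (2 * ln (nR R n))
         <= #|[set v in Wblk blk k | sub v == j]|%:R) ->
  forall (t : nat) (B : 'I_t -> {set V}),
    (1 <= t <= n)%N ->
    (* well-behaved *)
    (forall i, (#|B i| <= D)%N) ->
    (forall k v, (1 <= k <= N)%N -> v \in Wblk blk k ->
       #|[set i | v \in B i]|%:R <= Delta R D n k) ->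
    (forall k j, (1 <= k <= N)%N -> (1 <= j <= L)%N ->
       (#|(\bigcup_i B i) :&: [set v in Wblk blk k | sub v == j]|%:R : R)
         <= #|[set v in Wblk blk k | sub v == j]|%:R / 2) ->
  forall (k : nat) (u : V),
    (1 <= k <= N)%N -> u \in Wblk blk k -> u \notin \bigcup_i B i ->
    Num.min (1 / 4)
      (t%:R * (nR R n) `^ (Dpow D (1 - k%:R) - 1)
         * (ln (nR R n)) ^+ 2 * (ln (ln (nR R n))) ^+ D)
    <= Prob R D n blk
         (fun G => [exists i, u \in common_nbhd G (B i)]).
Proof.
have D_gt0 : (0 < D)%N by apply: leq_trans HD.
exists (2 ^ 32)%N => n n_ge N _ V blk L sub blk_range _ _ _ _ _ t B t_range card_B deg_B _
  k u _ uWk uNB.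
have lnln_ge2 : 2 <= ln (ln (nR R n)) by apply: two_le_ln_ln; rewrite /nR -natrX ler_nat.
have lnln_gt0 : 0 < ln (ln (nR R n)) by apply: lt_le_trans lnln_ge2.
have blk_u : blk u = k by move: uWk; rewrite inE => /eqP.
have uNBi i : u \notin B i by apply: contra uNB => uBi; apply/bigcupP; exists i.
have pblk_ge0_le1 i j : 0 <= pblk R D n i j <= 1.
  rewrite pblk_scaleE // ge_min lexx orbT andbT le_min ler01 andbT.
  by rewrite mulr_ge0 ?ltW ?edge_scale_gt0 ?level_weight_gt0.
set beta := edge_scale R D n k.
pose g b := level_weight R D n (blk b).
have q_minE b : pblk R D n (blk b) (blk u) = Num.min (beta * g b) 1.
  by rewrite blk_u pblk_scaleE.
have beta_gt0 : 0 < beta by apply: edge_scale_gt0.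
have g_gt0 b : 0 < g b by apply: level_weight_gt0.
apply: le_trans (min_le_div_edge_scale _ _ _ _ D_gt0 lnln_gt0 t lnln_ge2) _.
apply: prob_exists_common_nbhd_ge => //.
- by move=> b; rewrite q_minE lt_min ltr01 andbT mulr_gt0.
- by rewrite addr_gt0 ?ltr0n ?divr_gt0 ?exprn_gt0 //; case/andP: t_range.
apply: (sum_sum_inv_prod_setI_le _ _ blk g) => // [b c|b].
  exact: level_weight_anti.
by rewrite -Delta_level_weight // deg_B ?blk_range // inE.
Qed.
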